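(* Every RPBA-recognizable $\omega$-language is PPBA-recognizable.
   Context: A Parikh automaton of dimension $d$ is $\mathcal{A}=(Q,\Sigma,q_0,\Delta,F,C)$ with finite $Q$, $q_0\in Q$, $F\subseteq Q$, finite $\Delta\subseteq Q\times\Sigma\times\mathbb{N}^d\times Q$ and semi-linear $C\subseteq\mathbb{N}^d$ (a finite union of sets $\{b_0+\sum_{j=1}^\ell b_jz_j\mid z_j\in\mathbb{N}\}$, $b_j\in\mathbb{N}^d$). A run on an infinite word $\alpha$ is $r_1r_2\cdots$ with $r_i=(p_{i-1},\alpha_i,\mathbf{v}_i,p_i)\in\Delta$, $p_0=q_0$, and $\rho(r_1\cdots r_i)=\sum_{k\le i}\mathbf{v}_k$. For an RPBA (reachability Parikh–Büchi automaton) the run is accepting if there is $i\ge1$ with $p_i\in F$ and $\rho(r_1\cdots r_i)\in C$, and there are infinitely many $j$ with $p_j\in F$. For a PPBA (prefix Parikh–Büchi automaton) the run is accepting if there are infinitely many $i\ge1$ with $p_i\in F$ and $\rho(r_1\cdots r_i)\in C$. An $\omega$-language is X-recognizable if it equals the set of infinite words with an accepting run of some automaton of type X. *)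

From mathcomp Require Import all_boot.
Set Implicit Arguments. Unset Strict Implicit. Unset Printing Implicit Defensive.

Definition vec (d : nat) := {ffun 'I_d -> nat}.

(* Linear set {b0 + sum_j b_j z_j | z_j in N}, given by (b0, [b_1; ...; b_l]). *)
Definition linear_set (d : nat) := (vec d * seq (vec d))%type.

Definition in_linear (d : nat) (L : linear_set d) (v : vec d) : Prop :=
  exists z : nat -> nat,
    forall j : 'I_d,
      v j = L.1 j + \sum_(l < size L.2) z l * (nth [ffun => 0] L.2 l) j.

Definition semilinear (d : nat) := seq (linear_set d).

Definition in_semilinear (d : nat) (C : semilinear d) (v : vec d) : Prop :=
  exists2 k, k < size C & in_linear (nth ([ffun => 0], [::]) C k) v.

Record PA (Sigma : finType) : Type := MkPA {
  pa_Q : finType;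
  pa_d : nat;
  pa_q0 : pa_Q;
  pa_Delta : seq (pa_Q * Sigma * vec pa_d * pa_Q);
  pa_F : pred pa_Q;
  pa_C : semilinear pa_d
}.

(* A run r_1 r_2 ... on alpha (alpha_i = alpha (i-1)) is described by its
   state sequence p (p 0 = q0, p i = p_i) and its vector sequence v
   (v (i-1) = v_i), with r_i = (p (i-1), alpha (i-1), v (i-1), p i) in Delta. *)
Definition is_run (Sigma : finType) (A : PA Sigma) (alpha : nat -> Sigma)
    (p : nat -> pa_Q A) (v : nat -> vec (pa_d A)) : Prop :=
  p 0 = @pa_q0 _ A /\
  forall i, (p i, alpha i, v i, p i.+1) \in @pa_Delta _ A.

Definition rho (d : nat) (v : nat -> vec d) (i : nat) : vec d :=
  [ffun j => \sum_(k < i) v k j].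

Definition RPBA_accepts (Sigma : finType) (A : PA Sigma) (alpha : nat -> Sigma) : Prop :=
  exists p v, @is_run _ A alpha p v /\
    (exists i, 1 <= i /\ p i \in @pa_F _ A /\ in_semilinear (@pa_C _ A) (rho v i)) /\
    (forall n, exists j, n <= j /\ p j \in @pa_F _ A).

Definition PPBA_accepts (Sigma : finType) (A : PA Sigma) (alpha : nat -> Sigma) : Prop :=
  exists p v, @is_run _ A alpha p v /\
    (forall n, exists i, n <= i /\ 1 <= i /\ p i \in @pa_F _ A /\
                         in_semilinear (@pa_C _ A) (rho v i)).

Definition RPBA_recognizable (Sigma : finType) (L : (nat -> Sigma) -> Prop) : Prop :=
  exists A : PA Sigma, forall alpha, L alpha <-> RPBA_accepts A alpha.

Definition PPBA_recognizable (Sigma : finType) (L : (nat -> Sigma) -> Prop) : Prop :=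
  exists A : PA Sigma, forall alpha, L alpha <-> PPBA_accepts A alpha.

From mathcomp Require Import all_boot.
Set Implicit Arguments. Unset Strict Implicit. Unset Printing Implicit Defensive.

(* An accepting RPBA run needs one position i in F with counter value in C,
   followed by infinitely many visits to F.  The PPBA below guesses i: it
   simulates A in phase false and may switch to phase true when entering F;
   in phase true it follows A's transitions but adds only zero vectors, so the
   counter keeps its value at the switch.  Its accepting states are the
   phase-true copies of F, hence infinitely many accepting prefixes with
   counter in C amount to one good switch followed by infinitely many visits
   to F. *)

Definition freeze_after d (i : nat) (v : nat -> vec d) (k : nat) : vec d :=
  if k < i then v k else [ffun => 0].

Lemma eq_rho d (v w : nat -> vec d) i :
  (forall k, k < i -> v k = w k) -> rho v i = rho w i.
Proof.
by move=> eq_vw; apply/ffunP => x; rewrite !ffunE; apply: eq_bigr => k _; rewrite eq_vw.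
Qed.

Lemma rho_freeze_after d (v : nat -> vec d) i j :
  i <= j -> rho (freeze_after i v) j = rho v i.
Proof.
move=> le_ij; apply/ffunP => x; rewrite !ffunE.
rewrite -(big_mkord xpredT (fun k => freeze_after i v k x)) (big_cat_nat (leq0n i) le_ij) /=.
rewrite [X in _ + X]big_nat_cond [X in _ + X]big1 ?addn0; last first.
  by move=> k /andP[/andP[le_ik _] _]; rewrite /freeze_after ltnNge le_ik ffunE.
by rewrite big_mkord; apply: eq_bigr => k _; rewrite /freeze_after ltn_ord.
Qed.

Lemma rho_stable d (v : nat -> vec d) i j :
  (forall k, i <= k -> v k = [ffun => 0]) -> i <= j -> rho v j = rho v i.
Proof.
move=> v0 le_ij; rewrite -(rho_freeze_after v le_ij); apply: eq_rho => k _.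
by rewrite /freeze_after; case: ltnP => // /v0.
Qed.

Section ReachabilityToPrefix.

Variables (Sigma : finType) (A : PA Sigma).

Local Notation Q := (pa_Q A).
Local Notation d := (pa_d A).
Local Notation Delta := (pa_Delta A).
Local Notation F := (@pa_F _ A).

(* Phase-true transitions forget the vector of the A-transition they copy;
   [pick_vec] recovers one, so that runs of [phase_PA] project to runs of A. *)
Definition pick_vec (p : Q) (a : Sigma) (q : Q) : vec d :=
  let matches t := (t.1.1 == (p, a)) && (t.2 == q) in
  (nth (p, a, [ffun => 0], q) Delta (find matches Delta)).1.2.

Lemma pick_vecP p a w q :
  (p, a, w, q) \in Delta -> (p, a, pick_vec p a q, q) \in Delta.
Proof.
move=> pawq; rewrite /pick_vec; set matches := fun t => _ && _.
have has_match : has matches Delta.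
  by apply/hasP; exists (p, a, w, q); rewrite /matches /= ?eqxx.
have := nth_find (p, a, [ffun => 0], q) has_match.
have := mem_nth (p, a, [ffun => 0], q) (_ : find matches Delta < size Delta).
rewrite -has_find => /(_ has_match).
by case: nth => [[[p' a'] w'] q']; rewrite /matches /= => ? /andP[/eqP[<- <-] /eqP <-].
Qed.

Definition lift_trans (b b' : bool) (v : vec d) (t : Q * Sigma * vec d * Q) :=
  ((t.1.1.1, b), t.1.1.2, v, (t.2, b')).

Definition phase_Delta : seq ((Q * bool) * Sigma * vec d * (Q * bool)) :=
  [seq lift_trans false false t.1.2 t | t <- Delta] ++
  [seq lift_trans false true t.1.2 t | t <- Delta & F t.2] ++
  [seq lift_trans true true [ffun => 0] t | t <- Delta].

Lemma mem_phase_Delta p b a v q b' :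
  ((p, b), a, v, (q, b')) \in phase_Delta <->
  if b then [/\ b' : Prop, v = [ffun => 0] & exists w, (p, a, w, q) \in Delta]
  else (p, a, v, q) \in Delta /\ (b' -> F q).
Proof.
split.
  rewrite !mem_cat => /or3P[] /mapP[[[[p' a'] w] q']];
    rewrite ?mem_filter => + [-> -> -> -> -> ->] //=.
  - by case/andP.
  - by move=> pawq; split=> //; exists w.
case: b => [[b'T -> [w pawq]] | [pavq]]; rewrite !mem_cat.
  by rewrite b'T; apply/or3P/Or33/mapP; exists (p, a, w, q).
case: b' => [/(_ isT) Fq | _]; apply/or3P.
  by apply/Or32/mapP; exists (p, a, v, q); rewrite ?mem_filter ?Fq.
by apply/Or31/mapP; exists (p, a, v, q).
Qed.

Definition phase_PA : PA Sigma :=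
  @MkPA Sigma (Q * bool)%type d (@pa_q0 _ A, false) phase_Delta
    (fun s => s.2 && F s.1) (pa_C A).

Lemma phase_run_lift alpha p v i :
  @is_run _ A alpha p v -> 0 < i -> F (p i) ->
  @is_run _ phase_PA alpha (fun j => (p j, i <= j)) (freeze_after i v).
Proof.
move=> [p0 run] i_gt0 Fpi; split; first by rewrite p0 leqNgt i_gt0.
move=> j; apply/mem_phase_Delta; rewrite /freeze_after ltnNge.
have [le_ij | lt_ji] := leqP i j.
  by split; [exact: leq_trans le_ij (leqnSn j) | | exists (v j)].
split=> // le_iSj; suff <- : i = j.+1 by [].
by apply/eqP; rewrite eqn_leq le_iSj lt_ji.
Qed.

Section PhaseRun.

Variables (alpha : nat -> Sigma) (pb : nat -> Q * bool) (vb : nat -> vec d).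
Hypothesis run : @is_run _ phase_PA alpha pb vb.

Lemma phase_run_step j :
  if (pb j).2 then [/\ (pb j.+1).2 : Prop, vb j = [ffun => 0]
                     & exists w, ((pb j).1, alpha j, w, (pb j.+1).1) \in Delta]
  else ((pb j).1, alpha j, vb j, (pb j.+1).1) \in Delta /\ ((pb j.+1).2 -> F (pb j.+1).1).
Proof. by apply/mem_phase_Delta; rewrite -!surjective_pairing; apply: run.2. Qed.

Lemma phase_run_mono j k : j <= k -> (pb j).2 -> (pb k).2.
Proof.
move=> /subnK <-; elim: (k - j) => // m IH /IH.
by have := phase_run_step (m + j); case: (pb _).2 => // [[]].
Qed.

Lemma phase_run_frozen j : (pb j).2 -> forall k, j <= k -> vb k = [ffun => 0].
Proof.
move=> pbj k /phase_run_mono/(_ pbj).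
by have := phase_run_step k; case: (pb k).2 => // [[]].
Qed.

Lemma phase_run_switch j : ~~ (pb j).2 -> (pb j.+1).2 -> F (pb j.+1).1.
Proof. by have := phase_run_step j; case: (pb j).2 => // [[_]]. Qed.

Definition restore_vec (j : nat) : vec d :=
  if (pb j).2 then pick_vec (pb j).1 (alpha j) (pb j.+1).1 else vb j.

Lemma phase_run_proj : @is_run _ A alpha (fun j => (pb j).1) restore_vec.
Proof.
split; first by rewrite run.1.
move=> j; have := phase_run_step j; rewrite /restore_vec.
by case: (pb j).2 => [[_ _ [w /pick_vecP]] | []].
Qed.

End PhaseRun.

Lemma phase_PA_complete alpha : RPBA_accepts A alpha -> PPBA_accepts phase_PA alpha.
Proof.
move=> [p [v [run [[i [i_gt0 [Fpi Ci]]] infF]]]].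
exists (fun j => (p j, i <= j)), (freeze_after i v); split; first exact: phase_run_lift.
move=> n; have [j [le_nij Fpj]] := infF (maxn n i).
move: le_nij; rewrite geq_max => /andP[le_nj le_ij].
by exists j; rewrite /= le_ij rho_freeze_after // (leq_trans i_gt0 le_ij).
Qed.

Lemma phase_PA_sound alpha : PPBA_accepts phase_PA alpha -> RPBA_accepts A alpha.
Proof.
move=> [pb [vb [run acc]]].
have switched : exists j, (pb j).2 by have [i [_ [_ [/andP[? _] _]]]] := acc 0; exists i.
have [s pbs min_s] := ex_minnP switched.
have s_gt0 : 0 < s by case: s pbs {min_s} => //; rewrite run.1.
exists (fun j => (pb j).1), (restore_vec alpha pb vb); split; first exact: phase_run_proj.
split; last by move=> n; have [i [le_ni [_ [/andP[_ Fi] _]]]] := acc n; exists i.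
have not_pb_pred : ~~ (pb s.-1).2.
  by apply/negP => /min_s; rewrite leqNgt ltn_predL s_gt0.
exists s; split=> //; split.
  by have := phase_run_switch run not_pb_pred; rewrite prednK // => /(_ pbs).
have [i [_ [_ [/andP[pbi _] Ci]]]] := acc 0.
rewrite (@eq_rho _ _ vb) => [|k lt_ks].
  by rewrite -(rho_stable (phase_run_frozen run pbs) (min_s _ pbi)).
by rewrite /restore_vec; case: ifP => // /min_s; rewrite leqNgt lt_ks.
Qed.

End ReachabilityToPrefix.

Theorem corollary1 (Sigma : finType) (L : (nat -> Sigma) -> Prop) :
  RPBA_recognizable L -> PPBA_recognizable L.
Proof.
move=> [A recA]; exists (phase_PA A) => alpha.
by split=> [/recA/phase_PA_complete | /phase_PA_sound/recA].
Qed.
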